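(* Let $\mathcal{H}$ be a real Hilbert space, let $A\colon \mathcal{H}\rightrightarrows\mathcal{H}$ be maximally monotone and let $B\colon \mathcal{H}\to\mathcal{H}$ be monotone and $L$-Lipschitz. Let $x\in(A+B)^{-1}(0)$, suppose $(\lambda_k)_{k\geq-1}\subseteq\left[\varepsilon,\frac{1-2\varepsilon}{2L}\right]$ for some $\varepsilon>0$, and let $(x_k)$ be given by $x_0,x_{-1}\in\mathcal{H}$ and $$x_{k+1} = J_{\lambda_k A}\bigl(x_k - \lambda_k B(x_k) - \lambda_{k-1}(B(x_k)-B(x_{k-1}))\bigr)\quad\forall k\in\mathbb{N}.$$ Then, for all $k\in\mathbb{N}$, $$\|x_{k+1}-x\|^2+2\lambda_k\langle B(x_{k+1})-B(x_k),x-x_{k+1}\rangle + \left(\tfrac{1}{2}+\varepsilon\right)\|x_{k+1}-x_k\|^2 \leq \|x_k-x\|^2 + 2\lambda_{k-1}\langle B(x_k)-B(x_{k-1}), x-x_{k}\rangle +\tfrac{1}{2}\|x_{k}-x_{k-1}\|^2.$$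
   Context: $J_{\lambda A}:=(I+\lambda A)^{-1}$ denotes the resolvent. *)

From mathcomp Require Import all_boot all_order all_algebra.
From mathcomp Require Import reals.
Set Implicit Arguments. Unset Strict Implicit. Unset Printing Implicit Defensive.
Import Order.TTheory GRing.Theory Num.Theory.
Local Open Scope ring_scope.

Definition hnorm (R : realType) (V : lmodType R) (ip : V -> V -> R) (x : V) : R :=
  Num.sqrt (ip x x).

Record is_hilbert (R : realType) (V : lmodType R) (ip : V -> V -> R) : Prop := {
  ip_sym : forall x y, ip x y = ip y x;
  ip_linl : forall (a : R) x y z, ip (a *: x + y) z = a * ip x z + ip y z;
  ip_ge0 : forall x, 0 <= ip x x;
  ip_eq0 : forall x, ip x x = 0 -> x = 0;
  ip_complete : forall u : nat -> V,
    (forall e : R, 0 < e -> exists N, forall m n, (N <= m)%N -> (N <= n)%N ->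
        hnorm ip (u m - u n) < e) ->
    exists l : V, forall e : R, 0 < e -> exists N, forall n, (N <= n)%N ->
        hnorm ip (u n - l) < e
}.

(* Set-valued operators A : V ⇉ V are given by their graphs: A x u  means u ∈ A(x). *)
Definition monotone_op (R : realType) (V : lmodType R) (ip : V -> V -> R)
  (A : V -> V -> Prop) : Prop :=
  forall x u y v, A x u -> A y v -> 0 <= ip (x - y) (u - v).

Definition max_monotone (R : realType) (V : lmodType R) (ip : V -> V -> R)
  (A : V -> V -> Prop) : Prop :=
  monotone_op ip A /\
  forall A' : V -> V -> Prop, monotone_op ip A' ->
    (forall x u, A x u -> A' x u) -> forall x u, A' x u -> A x u.

Definition monotone_fun (R : realType) (V : lmodType R) (ip : V -> V -> R)
  (B : V -> V) : Prop := monotone_op ip (fun x u => u = B x).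

Definition lipschitz_with (R : realType) (V : lmodType R) (ip : V -> V -> R)
  (L : R) (B : V -> V) : Prop :=
  forall x y, hnorm ip (B x - B y) <= L * hnorm ip (x - y).

(* z = J_{lam A}(y) = (I + lam A)^{-1}(y), i.e. y ∈ z + lam A(z). *)
Definition resolvent_rel (R : realType) (V : lmodType R)
  (A : V -> V -> Prop) (lam : R) (y z : V) : Prop :=
  exists a, A z a /\ y = z + lam *: a.

(* Write z = x_{k+1}, y = x_k, w = x_{k-1}. Since z = J_{lam_k A}(...), monotonicity
   of A at z and at the zero x (where -B x is in A x), plus monotonicity of B, give
   0 <= <z - x, (y - z) + lam_k (B z - B y) - lam_{k-1} (B y - B w)>.
   The cosine law turns <z - x, y - z> into squared distances, and the one term of
   indefinite sign, lam_{k-1} <z - y, B y - B w>, is absorbed by Young's inequality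
   and the Lipschitz bound because lam_{k-1} L <= 1/2 - eps. *)

From mathcomp Require Import all_boot all_order all_algebra.
From mathcomp Require Import reals.
From mathcomp Require Import ring lra zify.
Import Order.TTheory GRing.Theory Num.Theory.
Set Implicit Arguments. Unset Strict Implicit. Unset Printing Implicit Defensive.
Local Open Scope ring_scope.

Section HilbertSpace.
Variables (R : realType) (V : lmodType R) (ip : V -> V -> R).
Hypothesis hip : is_hilbert ip.

Lemma ipDl x y z : ip (x + y) z = ip x z + ip y z.
Proof. by have := ip_linl hip 1 x y z; rewrite scale1r mul1r. Qed.

Lemma ipZl a x z : ip (a *: x) z = a * ip x z.
Proof.
have ip0l : ip 0 z = 0 by have := ipDl 0 0 z; rewrite addr0 => h; lra.
by have := ip_linl hip a x 0 z; rewrite addr0 ip0l addr0.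
Qed.

Lemma ipNl x z : ip (- x) z = - ip x z.
Proof. by rewrite -scaleN1r ipZl mulN1r. Qed.

Lemma ipBl x y z : ip (x - y) z = ip x z - ip y z.
Proof. by rewrite ipDl ipNl. Qed.

Lemma ipDr x y z : ip z (x + y) = ip z x + ip z y.
Proof. by rewrite !(ip_sym hip z) ipDl. Qed.

Lemma ipZr a x z : ip z (a *: x) = a * ip z x.
Proof. by rewrite !(ip_sym hip z) ipZl. Qed.

Lemma ipNr x z : ip z (- x) = - ip z x.
Proof. by rewrite !(ip_sym hip z) ipNl. Qed.

Lemma ipBr x y z : ip z (x - y) = ip z x - ip z y.
Proof. by rewrite ipDr ipNr. Qed.

Lemma ipNN x y : ip (- x) (- y) = ip x y.
Proof. by rewrite ipNl ipNr opprK. Qed.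

Lemma ip_sqrD x y : ip (x + y) (x + y) = ip x x + 2 * ip x y + ip y y.
Proof. rewrite !(ipDl, ipDr) (ip_sym hip y x); ring. Qed.

Lemma ip_young t u v : 0 < t -> 2 * ip u v <= t * ip u u + t^-1 * ip v v.
Proof.
move=> t_gt0; have tV : t * t^-1 = 1 by rewrite mulfV ?gt_eqF.
have sq_ge0 := ip_ge0 hip (t *: u - v).
rewrite ipBl !ipBr !ipZl !ipZr (ip_sym hip v u) in sq_ge0.
have : 0 <= t * (t * ip u u + t^-1 * ip v v - 2 * ip u v).
  by rewrite mulrBr mulrDr !mulrA tV mul1r; lra.
by rewrite pmulr_rge0 // subr_ge0.
Qed.

Lemma lipschitz_sqr_le L (B : V -> V) x y : lipschitz_with ip L B ->
  ip (B x - B y) (B x - B y) <= L ^+ 2 * ip (x - y) (x - y).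
Proof.
move=> /(_ x y); rewrite /hnorm => lip.
have := ler_pM (sqrtr_ge0 _) (sqrtr_ge0 _) lip lip.
by rewrite -!expr2 sqr_sqrtr ?ip_ge0 // exprMn sqr_sqrtr ?ip_ge0.
Qed.

Lemma lipschitz_cross_le L (B : V -> V) mu m d x y :
  0 < L -> lipschitz_with ip L B -> 0 <= mu -> mu * L <= m ->
  - (2 * mu * ip d (B x - B y)) <= m * (ip d d + ip (x - y) (x - y)).
Proof.
move=> L_gt0 lip mu_ge0 muL.
have young := ip_young (- d) (B x - B y) L_gt0.
rewrite ipNN ipNl in young.
have lipV : L^-1 * ip (B x - B y) (B x - B y) <= L * ip (x - y) (x - y).
  rewrite ler_pdivrMl // mulrA -expr2; exact: lipschitz_sqr_le.
have cross : - (2 * ip d (B x - B y)) <= L * (ip d d + ip (x - y) (x - y)) by lra.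
have sum_ge0 : 0 <= ip d d + ip (x - y) (x - y) by rewrite addr_ge0 ?ip_ge0.
apply: le_trans (ler_wpM2r sum_ge0 muL).
have -> : - (2 * mu * ip d (B x - B y)) = mu * - (2 * ip d (B x - B y)) by ring.
by rewrite -mulrA ler_wpM2l.
Qed.

Lemma frb_step_le (A : V -> V -> Prop) (B : V -> V) lam mu xs w y z :
  monotone_op ip A -> monotone_fun ip B -> A xs (- B xs) -> 0 <= lam ->
  resolvent_rel A lam (y - lam *: B y - mu *: (B y - B w)) z ->
  ip (z - xs) (z - xs) + 2 * lam * ip (B z - B y) (xs - z) + ip (z - y) (z - y)
  <= ip (y - xs) (y - xs) + 2 * mu * ip (B y - B w) (xs - y)
     - 2 * mu * ip (z - y) (B y - B w).
Proof.
move=> monoA monoB Axs lam_ge0 [a [Aza hz]].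
have lam_a : lam *: a = y - lam *: B y - mu *: (B y - B w) - z.
  by rewrite hz addrAC subrr add0r.
have mono : 0 <= ip (z - xs) (lam *: (a + B xs) + lam *: (B z - B xs)).
  rewrite ipDr !ipZr; apply: addr_ge0; apply: mulr_ge0 => //.
    by have := monoA _ _ _ _ Aza Axs; rewrite opprK.
  exact: monoB.
have step_dir : lam *: (a + B xs) + lam *: (B z - B xs)
          = (y - z) + lam *: (B z - B y) - mu *: (B y - B w).
  rewrite -scalerDr -addrA subrKC scalerDr lam_a [lam *: (B z - B y)]scalerBr.
  by rewrite (ACl ((1*4)*(5*2)*3)).
rewrite step_dir ipBr ipDr !ipZr in mono.
have polar : ip (y - xs) (y - xs)
             = ip (z - xs) (z - xs) + 2 * ip (z - xs) (y - z) + ip (z - y) (z - y).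
  by rewrite -[ip (z - y) _]ipNN opprB -ip_sqrD [z - xs + _]addrC subrKA.
have skew : ip (z - xs) (B z - B y) = - ip (B z - B y) (xs - z).
  by rewrite -ipNr opprB (ip_sym hip).
have recentre : ip (z - xs) (B y - B w)
                = ip (z - y) (B y - B w) - ip (B y - B w) (xs - y).
  rewrite -[z - xs](subrKA y) [ip (z - y + _) _]ipDl.
  by rewrite (ip_sym hip (y - xs)) -[y - xs]opprB ipNr.
rewrite skew recentre in mono; lra.
Qed.

End HilbertSpace.

Theorem lemma2p4 (R : realType) (V : lmodType R) (ip : V -> V -> R)
  (A : V -> V -> Prop) (B : V -> V) (L eps : R) (lam : int -> R)
  (x : int -> V) (xs : V) :
  is_hilbert ip ->
  max_monotone ip A ->
  monotone_fun ip B ->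
  0 < L -> lipschitz_with ip L B ->
  A xs (- B xs) ->
  0 < eps ->
  (forall k : int, -1 <= k -> eps <= lam k <= (1 - 2 * eps) / (2 * L)) ->
  (forall k : nat, resolvent_rel A (lam k)
      (x k - lam k *: B (x k) - lam (k%:Z - 1) *: (B (x k) - B (x (k%:Z - 1))))
      (x (k%:Z + 1))) ->
  forall k : nat,
    ip (x (k%:Z + 1) - xs) (x (k%:Z + 1) - xs)
    + 2 * lam k * ip (B (x (k%:Z + 1)) - B (x k)) (xs - x (k%:Z + 1))
    + (2^-1 + eps) * ip (x (k%:Z + 1) - x k) (x (k%:Z + 1) - x k)
    <= ip (x k - xs) (x k - xs)
       + 2 * lam (k%:Z - 1) * ip (B (x k) - B (x (k%:Z - 1))) (xs - x k)
       + 2^-1 * ip (x k - x (k%:Z - 1)) (x k - x (k%:Z - 1)).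
Proof.
move=> hip [monoA _] monoB L_gt0 lipB Axs eps_gt0 lam_bounds resolvent k.
have /andP[lam_ge _] := lam_bounds k (ltac:(lia)).
have /andP[lam'_ge lam'_le] := lam_bounds (k%:Z - 1) (ltac:(lia)).
have lam'L : lam (k%:Z - 1) * L <= 2^-1 - eps.
  by move: lam'_le; rewrite ler_pdivlMr ?mulr_gt0 // => ?; lra.
have descent := frb_step_le hip monoA monoB Axs
  (ltW (lt_le_trans eps_gt0 lam_ge)) (resolvent k).
have cross := lipschitz_cross_le hip (x (k%:Z + 1) - x k) (x k) (x (k%:Z - 1))
  L_gt0 lipB (ltW (lt_le_trans eps_gt0 lam'_ge)) lam'L.
have := ip_ge0 hip (x k - x (k%:Z - 1)); nra.
Qed.
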